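(* Let $k$ be a complete non-trivially valued non-Archimedean field. For every $\gamma\in\mathrm{PGL}(2,k)$ there exist two closed balls $B_{\mathrm{att}}(\gamma)$ and $B_{\mathrm{rep}}(\gamma)$ in $\mathbb{P}^{1,an}_k$, each of spherical radius $\|\gamma\|^{-1}$, such that $\gamma\big(\mathbb{P}^{1,an}_k\setminus B_{\mathrm{rep}}(\gamma)\big)\subset B_{\mathrm{att}}(\gamma)$.
   Context: $\mathbb{P}^{1,an}_k$ is the Berkovich projective line (one-point compactification of the space of multiplicative seminorms on $k[Z]$ extending $|\cdot|$) with its natural $\mathrm{PGL}(2,k)$-action. For $0<r\le1$, $\bar B^{an}(0,r)=\{x:|Z|_x\le r\}$; a closed ball of spherical radius $r$ in $\mathbb{P}^{1,an}_k$ is a set $g(\bar B^{an}(0,r))$ with $g$ in the image of $\mathrm{SL}(2,k^\circ)$ in $\mathrm{PGL}(2,k)$ (these are the Berkovich balls whose $k$-points form a closed ball of radius $r$ for the spherical metric $d((z_0{:}z_1),(w_0{:}w_1))=|z_0w_1-z_1w_0|/(\max(|z_0|,|z_1|)\max(|w_0|,|w_1|))$). For $\gamma\in\mathrm{PGL}(2,k)$, $\|\gamma\|$ is the maximum absolute value of the entries of a lift of $\gamma$ to $\mathrm{SL}(2,K)$, $K/k$ at most quadratic (so $\|\gamma\|\ge1$). *)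

From HB Require Import structures.
From mathcomp Require Import all_boot all_order all_algebra.
From mathcomp Require Import reals.
Set Implicit Arguments. Unset Strict Implicit. Unset Printing Implicit Defensive.
Import Order.TTheory GRing.Theory Num.Theory.
Local Open Scope ring_scope.

Section Berkovich.
Variables (R : realType) (k : fieldType) (abs : k -> R).

Definition is_absval : Prop :=
  [/\ forall x, 0 <= abs x,
      forall x, abs x = 0 <-> x = 0,
      forall x y, abs (x * y) = abs x * abs y &
      forall x y, abs (x + y) <= abs x + abs y].

Definition nonarchimedean : Prop :=
  forall x y, abs (x + y) <= Num.max (abs x) (abs y).

Definition nontrivially_valued : Prop :=
  exists x, abs x != 0 /\ abs x != 1.

Definition abs_complete : Prop :=
  forall u : nat -> k,
    (forall e : R, 0 < e -> exists N, forall m n, (N <= m)%N -> (N <= n)%N ->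
        abs (u m - u n) < e) ->
    exists l : k, forall e : R, 0 < e -> exists N, forall n, (N <= n)%N ->
        abs (u n - l) < e.

Definition complete_nonarch_valued_field : Prop :=
  [/\ is_absval, nonarchimedean, nontrivially_valued & abs_complete].

Definition is_mult_seminorm (s : {poly k} -> R) : Prop :=
  [/\ forall P, 0 <= s P,
      forall P Q, s (P + Q) <= s P + s Q,
      forall P Q, s (P * Q) = s P * s Q &
      forall c, s c%:P = abs c].

(* raw points of P^{1,an}_k: None is the point at infinity,
   Some s is the point of the affine line with seminorm s *)
Definition berk := option ({poly k} -> R).

Definition is_berk (x : berk) : Prop :=
  match x with None => True | Some s => is_mult_seminorm s end.

Definition m00 (M : 'M[k]_2) := M ord0 ord0.
Definition m01 (M : 'M[k]_2) := M ord0 ord_max.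
Definition m10 (M : 'M[k]_2) := M ord_max ord0.
Definition m11 (M : 'M[k]_2) := M ord_max ord_max.

(* (cZ+d)^n P((aZ+b)/(cZ+d)), n = deg P *)
Definition mob_num (M : 'M[k]_2) (P : {poly k}) : {poly k} :=
  \sum_(i < size P) P`_i *: ((m00 M *: 'X + (m01 M)%:P) ^+ i *
                              (m10 M *: 'X + (m11 M)%:P) ^+ ((size P).-1 - i)).

(* action of the class of M = (a b; c d) (z |-> (az+b)/(cz+d)) on P^{1,an}_k:
   (gamma x)(P) = |P o gamma|_x *)
Definition act (M : 'M[k]_2) (x : berk) : berk :=
  match x with
  | None => if m10 M == 0 then None
            else Some (fun P => abs P.[m00 M / m10 M])
  | Some s =>
      let den := s (m10 M *: 'X + (m11 M)%:P) in
      if den == 0 then None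
      else Some (fun P => s (mob_num M P) / den ^+ (size P).-1)
  end.

(* ||gamma||: max of |entries| of a lift to SL(2,K), i.e. of M / sqrt(det M) *)
Definition pgl_norm (M : 'M[k]_2) : R :=
  Num.max (Num.max (abs (m00 M)) (abs (m01 M)))
          (Num.max (abs (m10 M)) (abs (m11 M))) / Num.sqrt (abs (\det M)).

Definition closed_disc0 (r : R) (x : berk) : Prop :=
  match x with None => False | Some s => s 'X <= r end.

(* B is a closed ball of spherical radius r: B = g(\bar B^{an}(0,r)),
   g in the image of SL(2,k°) *)
Definition is_closed_ball (r : R) (B : berk -> Prop) : Prop :=
  exists g : 'M[k]_2,
    [/\ forall i j, abs (g i j) <= 1, \det g = 1 &
        forall y, B y <-> exists x, [/\ is_berk x, closed_disc0 r x & act g x = y]].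

End Berkovich.

From HB Require Import structures.
From mathcomp Require Import all_boot all_order all_algebra.
From mathcomp Require Import boolp reals.
From mathcomp Require Import zify ring.

Set Implicit Arguments.
Unset Strict Implicit.
Unset Printing Implicit Defensive.
Import Order.TTheory GRing.Theory Num.Theory.
Local Open Scope ring_scope.

(* Let p be an entry of M of largest absolute value. Multiplying by the Weyl
   element [[0,-1],[1,0]] on either side moves p to the upper-left corner,
   and dividing by it gives a Cartan decomposition M = G [[0,e],[-a,0]] K
   with G, K in SL(2,k°), |a| = |p| and e = det M / a (SL(2,k°) is a group
   by the ultrametric inequality). The middle factor z |-> -e/(a z) maps the
   complement of the disc of radius r = ||M||^-1 = sqrt|det M| / |p| into
   that disc, because |e| = |a| r^2; hence B_rep = K^-1(B(0,r)) and
   B_att = G(B(0,r)) work. On seminorms the action is computed through the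
   homogenisation P |-> (cZ+d)^n P((aZ+b)/(cZ+d)), which is linear,
   multiplicative and compatible with matrix products; this shows that the
   action preserves points of P^{1,an} and is functorial. *)

Section TwoByTwo.
Variable k : fieldType.
Implicit Types (A B M : 'M[k]_2) (a b c d : k).

Lemma ord2P (i : 'I_2) : i = ord0 \/ i = ord_max.
Proof. by case: i => [[|[|]]] // ?; [left | right]; apply: val_inj. Qed.

Lemma forall_ord2 (P : 'I_2 -> 'I_2 -> Prop) :
  P ord0 ord0 -> P ord0 ord_max -> P ord_max ord0 -> P ord_max ord_max ->
  forall i j, P i j.
Proof. by move=> ? ? ? ? i j; case: (ord2P i) => ->; case: (ord2P j) => ->. Qed.

Lemma det_mx2 M : \det M = m00 M * m11 M - m01 M * m10 M.
Proof.
rewrite (expand_det_row _ ord0) !big_ord_recl big_ord0 addr0 /cofactor !det_mx11.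
rewrite !mxE /= expr0 expr1 mul1r mulN1r mulrN.
have l1 : lift ord0 (0 : 'I_1) = ord_max :> 'I_2 by apply: val_inj.
have l0 : lift (lift ord0 ord0) (0 : 'I_1) = ord0 :> 'I_2 by apply: val_inj.
by rewrite l0 l1.
Qed.

Lemma mulmx2E A B i j : (A *m B) i j = A i ord0 * B ord0 j + A i ord_max * B ord_max j.
Proof.
rewrite mxE !big_ord_recl big_ord0 addr0.
by congr (_ + A i _ * B _ j); apply: val_inj.
Qed.

Lemma m00_mul A B : m00 (A *m B) = m00 A * m00 B + m01 A * m10 B.
Proof. exact: mulmx2E. Qed.
Lemma m01_mul A B : m01 (A *m B) = m00 A * m01 B + m01 A * m11 B.
Proof. exact: mulmx2E. Qed.
Lemma m10_mul A B : m10 (A *m B) = m10 A * m00 B + m11 A * m10 B.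
Proof. exact: mulmx2E. Qed.
Lemma m11_mul A B : m11 (A *m B) = m10 A * m01 B + m11 A * m11 B.
Proof. exact: mulmx2E. Qed.

Definition mx2 a b c d : 'M[k]_2 :=
  \matrix_(i, j) if i == ord0 then (if j == ord0 then a else b)
                 else (if j == ord0 then c else d).

Lemma m00_mx2 a b c d : m00 (mx2 a b c d) = a. Proof. by rewrite /m00 mxE. Qed.
Lemma m01_mx2 a b c d : m01 (mx2 a b c d) = b. Proof. by rewrite /m01 mxE. Qed.
Lemma m10_mx2 a b c d : m10 (mx2 a b c d) = c. Proof. by rewrite /m10 mxE. Qed.
Lemma m11_mx2 a b c d : m11 (mx2 a b c d) = d. Proof. by rewrite /m11 mxE. Qed.

Lemma eq_mx2 A B : m00 A = m00 B -> m01 A = m01 B -> m10 A = m10 B -> m11 A = m11 B ->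
  A = B.
Proof. by move=> *; apply/matrixP; apply: forall_ord2. Qed.

End TwoByTwo.

Section MobiusHomogenization.
Variable k : fieldType.
Implicit Types (A B M : 'M[k]_2) (P Q p : {poly k}) (a b : k).

Definition numZ M : {poly k} := m00 M *: 'X + (m01 M)%:P.
Definition denZ M : {poly k} := m10 M *: 'X + (m11 M)%:P.

(* (cZ+d)^n P((aZ+b)/(cZ+d)) for a fixed n >= deg P, unlike [mob_num], which
   uses n = deg P; fixing n is what makes it linear and multiplicative. *)
Definition mob_homog M n P : {poly k} :=
  \sum_(i < n.+1) P`_i *: (numZ M ^+ i * denZ M ^+ (n - i)).

Fact mob_homog_is_linear M n : linear (mob_homog M n).
Proof.
move=> c P Q; rewrite /mob_homog scaler_sumr -big_split; apply: eq_bigr => i _.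
by rewrite coefD coefZ scalerDl scalerA.
Qed.

HB.instance Definition _ M n :=
  GRing.isLinear.Build k {poly k} {poly k} _ (mob_homog M n) (mob_homog_is_linear M n).

Lemma poly_sum_wide m P : (size P <= m)%N -> P = \sum_(i < m) P`_i *: 'X^i.
Proof. by move=> hP; rewrite -poly_def -[LHS](take_poly_id hP). Qed.

Lemma mob_homog_wide M n P : (size P <= n.+1)%N ->
  mob_homog M n P = \sum_(i < size P) P`_i *: (numZ M ^+ i * denZ M ^+ (n - i)).
Proof.
move=> hP; pose F i := P`_i *: (numZ M ^+ i * denZ M ^+ (n - i)).
rewrite (big_ord_widen n.+1 F hP) big_mkcond; apply: eq_bigr => i _.
by case: ltnP => // /(nth_default 0) ->; rewrite scale0r.
Qed.

Lemma mob_numE M P : mob_num M P = mob_homog M (size P).-1 P.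
Proof. by rewrite mob_homog_wide ?leqSpred. Qed.

Lemma mob_homogXn M n i : (i <= n)%N ->
  mob_homog M n 'X^i = numZ M ^+ i * denZ M ^+ (n - i).
Proof.
move=> le_in; rewrite /mob_homog (bigD1 (Ordinal (le_in : (i < n.+1)%N))) //=.
rewrite coefXn eqxx scale1r big1 ?addr0 // => j /eqP neq_ji.
by rewrite coefXn; case: eqP => [eq_ji | _]; [case: neq_ji; apply: val_inj | rewrite scale0r].
Qed.

Lemma size_lin a b : (size (a *: 'X + b%:P)%R <= 2)%N.
Proof.
rewrite (leq_trans (size_polyD _ _)) // geq_max (leq_trans (size_polyC_leq1 b)) //.
by rewrite (leq_trans (size_scale_leq _ _)) // size_polyX.
Qed.

Lemma size_exp_lin p i : (size p <= 2)%N -> (size (p ^+ i) <= i.+1)%N.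
Proof.
move=> hp; rewrite (leq_trans (size_poly_exp_leq _ _)) // ltnS.
by case: (size p) hp => [|[|[|]]] //= _; rewrite ?mul0n ?mul1n.
Qed.

Lemma size_numZ M : (size (numZ M) <= 2)%N. Proof. exact: size_lin. Qed.
Lemma size_denZ M : (size (denZ M) <= 2)%N. Proof. exact: size_lin. Qed.

Lemma size_numZX M i : (size (numZ M ^+ i) <= i.+1)%N.
Proof. exact/size_exp_lin/size_numZ. Qed.
Lemma size_denZX M i : (size (denZ M ^+ i) <= i.+1)%N.
Proof. exact/size_exp_lin/size_denZ. Qed.

Lemma size_mob_homog M n P : (size (mob_homog M n P) <= n.+1)%N.
Proof.
rewrite /mob_homog; apply: (big_ind (fun p : {poly k} => size p <= n.+1)%N).
- by rewrite size_poly0.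
- by move=> p q hp hq; rewrite (leq_trans (size_polyD _ _)) // geq_max hp hq.
move=> i _; rewrite (leq_trans (size_scale_leq _ _)) // (leq_trans (size_polyMleq _ _)) //.
have := size_numZX M i; have := size_denZX M (n - i).
by have := ltn_ord i; lia.
Qed.

Lemma mob_homogM M m n P Q : (size P <= m.+1)%N -> (size Q <= n.+1)%N ->
  mob_homog M (m + n) (P * Q) = mob_homog M m P * mob_homog M n Q.
Proof.
move=> /poly_sum_wide -> /poly_sum_wide ->.
rewrite mulr_suml linear_sum (linear_sum (mob_homog M m)) mulr_suml.
apply: eq_bigr => i _.
rewrite mulr_sumr linear_sum (linear_sum (mob_homog M n)) mulr_sumr.
apply: eq_bigr => j _.
have le_im : (i <= m)%N by rewrite -ltnS.
have le_jn : (j <= n)%N by rewrite -ltnS.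
rewrite -scalerAl -scalerAr scalerA -exprD !linearZZ /= -scalerAl -scalerAr scalerA.
rewrite !mob_homogXn ?leq_add //; congr (_ *: _).
rewrite (_ : (m + n - (i + j) = (m - i) + (n - j))%N); last by lia.
by rewrite !exprD mulrACA.
Qed.

Lemma mob_homog_lift M m n P : (size P <= n.+1)%N ->
  mob_homog M (m + n) P = denZ M ^+ m * mob_homog M n P.
Proof.
move=> hP; rewrite -[P in LHS]mul1r mob_homogM ?size_poly1 //.
by rewrite -(expr0 'X) mob_homogXn // expr0 mul1r subn0.
Qed.

Lemma mob_homog_exp M p i : (size p <= 2)%N ->
  mob_homog M i (p ^+ i) = mob_homog M 1 p ^+ i.
Proof.
move=> hp; elim: i => [|i IH].
  by rewrite !expr0 -(expr0 'X) mob_homogXn // !expr0 mul1r.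
by rewrite exprS (mob_homogM M (m:=1) (n:=i)) ?IH ?exprS // size_exp_lin.
Qed.

Lemma mob_homog_lin M a b : mob_homog M 1 (a *: 'X + b%:P) = a *: numZ M + b *: denZ M.
Proof.
rewrite -alg_polyC linearD !linearZZ /= -{1}(expr1 'X) -(expr0 'X) !mob_homogXn //.
by rewrite subnn subn0 !expr0 !expr1 mulr1 mul1r.
Qed.

Lemma numZ_mul A B : numZ (A *m B) = m00 A *: numZ B + m01 A *: denZ B.
Proof. by rewrite /numZ /denZ m00_mul m01_mul -!mul_polyC !polyCD !polyCM; ring. Qed.

Lemma denZ_mul A B : denZ (A *m B) = m10 A *: numZ B + m11 A *: denZ B.
Proof. by rewrite /numZ /denZ m10_mul m11_mul -!mul_polyC !polyCD !polyCM; ring. Qed.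

Lemma mob_homog_mul A B n P :
  mob_homog B n (mob_homog A n P) = mob_homog (A *m B) n P.
Proof.
rewrite [mob_homog A n P]/mob_homog linear_sum; apply: eq_bigr => i _.
rewrite linearZZ /=; congr (_ *: _).
have le_in : (i <= n)%N by rewrite -ltnS.
rewrite -{1}(subnKC le_in) mob_homogM ?size_numZX ?size_denZX //.
rewrite (mob_homog_exp B i (size_numZ A)) (mob_homog_exp B (n - i) (size_denZ A)).
by rewrite !mob_homog_lin numZ_mul denZ_mul.
Qed.

Lemma numZ1 : numZ 1%:M = 'X.
Proof. by rewrite /numZ /m00 /m01 !mxE /= scale1r addr0. Qed.

Lemma denZ1 : denZ 1%:M = 1.
Proof. by rewrite /denZ /m10 /m11 !mxE /= scale0r add0r. Qed.

Lemma mob_homog1 n P : (size P <= n.+1)%N -> mob_homog 1%:M n P = P.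
Proof.
move=> hP; rewrite mob_homog_wide // [RHS](poly_sum_wide (leqnn _)).
by apply: eq_bigr => i _; rewrite numZ1 denZ1 expr1n mulr1.
Qed.

Lemma horner_mob_homog M n P x : (size P <= n.+1)%N -> (denZ M).[x] != 0 ->
  (mob_homog M n P).[x] = (denZ M).[x] ^+ n * P.[(numZ M).[x] / (denZ M).[x]].
Proof.
move=> hP hv; rewrite mob_homog_wide // horner_sum (horner_coef P) mulr_sumr.
apply: eq_bigr => i _; rewrite hornerZ hornerM !horner_exp.
have le_in : (i <= n)%N by rewrite -ltnS (leq_trans (ltn_ord i)).
rewrite -{2}(subnKC le_in) exprD expr_div_n.
have : (denZ M).[x] ^+ i != 0 by rewrite expf_neq0.
by move: ((numZ M).[x] ^+ i) ((denZ M).[x] ^+ i) => a b hb; field.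
Qed.

End MobiusHomogenization.

Section Action.
Variables (R : realType) (k : fieldType) (abs : k -> R).
Hypothesis abs_absval : is_absval abs.
Implicit Types (A B M : 'M[k]_2) (P Q : {poly k}) (a b z : k) (x : berk R k).

Lemma abs_ge0 a : 0 <= abs a. Proof. by case: abs_absval. Qed.
Lemma absM a b : abs (a * b) = abs a * abs b. Proof. by case: abs_absval. Qed.

Lemma abs_eq0 a : (abs a == 0) = (a == 0).
Proof. by case: abs_absval => _ h _ _; apply/eqP/eqP => /h. Qed.

Lemma abs0 : abs 0 = 0. Proof. by apply/eqP; rewrite abs_eq0. Qed.

Lemma abs1 : abs 1 = 1.
Proof.
have : abs 1 * (abs 1 - 1) = 0 by rewrite mulrBr mulr1 -absM mulr1 subrr.
by move/eqP; rewrite mulf_eq0 subr_eq0 abs_eq0 oner_eq0 => /eqP.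
Qed.

Lemma absX a n : abs (a ^+ n) = abs a ^+ n.
Proof. by elim: n => [|n IH]; rewrite ?expr0 ?abs1 // !exprS absM IH. Qed.

Lemma absN1 : abs (-1) = 1.
Proof.
have : abs (-1) ^+ 2 = 1 ^+ 2 by rewrite -absX sqrrN !expr1n abs1.
by move/eqP; rewrite eqrXn2 ?abs_ge0 // => /eqP.
Qed.

Lemma absN a : abs (- a) = abs a. Proof. by rewrite -mulN1r absM absN1 mul1r. Qed.

Lemma absV a : abs a^-1 = (abs a)^-1.
Proof.
have [->|a0] := eqVneq a 0; first by rewrite invr0 abs0 invr0.
apply: (mulfI (_ : abs a != 0)); first by rewrite abs_eq0.
by rewrite -absM !divff ?abs_eq0 ?abs1.
Qed.

Lemma eval_is_mult_seminorm z : is_mult_seminorm abs (fun P => abs P.[z]).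
Proof.
split=> [P | P Q | P Q | c]; rewrite ?abs_ge0 ?hornerD ?hornerM ?absM ?hornerC //.
by case: abs_absval.
Qed.

Section Seminorm.
Variable s : {poly k} -> R.
Hypothesis s_seminorm : is_mult_seminorm abs s.

Lemma sn_ge0 P : 0 <= s P. Proof. by case: s_seminorm. Qed.
Lemma snD P Q : s (P + Q) <= s P + s Q. Proof. by case: s_seminorm. Qed.
Lemma snM P Q : s (P * Q) = s P * s Q. Proof. by case: s_seminorm. Qed.
Lemma snC a : s a%:P = abs a. Proof. by case: s_seminorm. Qed.
Lemma snZ a P : s (a *: P) = abs a * s P. Proof. by rewrite -mul_polyC snM snC. Qed.
Lemma snN P : s (- P) = s P. Proof. by rewrite -scaleN1r snZ absN1 mul1r. Qed.

Lemma sn1 : s 1 = 1. Proof. by rewrite -polyC1 snC abs1. Qed.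

Lemma snX P n : s (P ^+ n) = s P ^+ n.
Proof. by elim: n => [|n IH]; rewrite ?expr0 ?sn1 // !exprS snM IH. Qed.

Lemma snDr_eq0 P Q : s Q = 0 -> s (P + Q) = s P.
Proof.
move=> sQ0; apply/eqP; rewrite eq_le; apply/andP; split.
  by rewrite -[X in _ <= X]addr0 -sQ0 snD.
by have := snD (P + Q) (- Q); rewrite addrK snN sQ0 addr0.
Qed.

Lemma sn_lin_root_eval a b : s (a *: 'X + b%:P) = 0 -> a != 0 ->
  forall P, s P = abs P.[- b / a].
Proof.
move=> s0 a0 P; set g := - b / a.
have lin_eq : a *: 'X + b%:P = a *: ('X - g%:P).
  by rewrite scalerBr -!mul_polyC -polyCM /g mulrCA divff // mulr1 polyCN opprK.
have sXg0 : s ('X - g%:P) = 0.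
  move/eqP: s0; rewrite lin_eq snZ mulf_eq0 abs_eq0 (negbTE a0) /=.
  by move/eqP.
have /factor_theorem [q Pq] : root (P - P.[g]%:P) g.
  by rewrite /root hornerD hornerN hornerC subrr.
by rewrite -[in LHS](subrK P.[g]%:P P) Pq addrC snDr_eq0 ?snM ?sXg0 ?mulr0 // snC.
Qed.

Lemma sn_mob_num M n P : s (denZ M) != 0 -> (size P <= n.+1)%N ->
  s (mob_num M P) / s (denZ M) ^+ (size P).-1 = s (mob_homog M n P) / s (denZ M) ^+ n.
Proof.
move=> sv0 hP; rewrite mob_numE -(subnK (_ : (size P).-1 <= n)%N); last by lia.
rewrite mob_homog_lift ?leqSpred // snM snX exprD invfM mulrACA divff ?mul1r //.
by rewrite expf_neq0.
Qed.

End Seminorm.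

Lemma act_None_inf M : m10 M = 0 -> act abs M None = None.
Proof. by rewrite /act => ->; rewrite eqxx. Qed.

Lemma act_None_fin M : m10 M != 0 ->
  act abs M None = Some (fun P => abs P.[m00 M / m10 M]).
Proof. by rewrite /act => /negbTE ->. Qed.

Lemma act_Some_inf M s : s (denZ M) = 0 -> act abs M (Some s) = None.
Proof. by rewrite /act -/(denZ M) => ->; rewrite eqxx. Qed.

Lemma act_Some_fin M s : s (denZ M) != 0 ->
  act abs M (Some s) = Some (fun P => s (mob_num M P) / s (denZ M) ^+ (size P).-1).
Proof. by rewrite /act -/(denZ M) => /negbTE ->. Qed.

Lemma act_is_berk M x : is_berk abs x -> is_berk abs (act abs M x).
Proof.
case: x => [s|] hs; last first.
  have [/act_None_inf -> // | /act_None_fin ->] := eqVneq (m10 M) 0.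
  exact: eval_is_mult_seminorm.
have [/act_Some_inf -> // | sv0] := eqVneq (s (denZ M)) 0.
rewrite act_Some_fin //.
split=> [P | P Q | P Q | c].
- by rewrite divr_ge0 ?exprn_ge0 ?(sn_ge0 hs).
- pose n := (maxn (size P) (size Q)).-1.
  rewrite !(sn_mob_num hs (n := n) sv0) ?(leq_trans (size_polyD _ _)) /n; try lia.
  by rewrite linearD -mulrDl ler_wpM2r ?invr_ge0 ?exprn_ge0 ?(sn_ge0 hs) ?(snD hs).
- pose m := (size P).-1; pose n := (size Q).-1.
  rewrite (sn_mob_num hs (n := (m + n)%N) sv0) ?(leq_trans (size_polyMleq _ _)) /m /n; try lia.
  by rewrite mob_homogM ?leqSpred // !mob_numE (snM hs) exprD invfM mulrACA.
- rewrite (sn_mob_num hs (n := 0) sv0) ?size_polyC_leq1 // expr0 divr1.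
  by rewrite /mob_homog big_ord1 coefC /= !expr0 mulr1 (snZ hs) (sn1 hs) mulr1.
Qed.


Lemma act_eval M z : (denZ M).[z] != 0 ->
  act abs M (Some (fun P => abs P.[z])) =
  Some (fun P => abs P.[(numZ M).[z] / (denZ M).[z]]).
Proof.
move=> v0; rewrite act_Some_fin ?abs_eq0 //; congr Some; apply: funext => P.
rewrite mob_numE horner_mob_homog ?leqSpred // absM absX mulrAC divff ?mul1r //.
by rewrite expf_neq0 ?abs_eq0.
Qed.

Lemma act1 x : is_berk abs x -> act abs 1%:M x = x.
Proof.
case: x => [s|] hs; last by rewrite act_None_inf // /m10 mxE.
rewrite act_Some_fin denZ1 (sn1 hs) ?oner_neq0 //; congr Some; apply: funext => P.
by rewrite expr1n divr1 mob_numE mob_homog1 ?leqSpred.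
Qed.

Lemma horner_numZ M z : (numZ M).[z] = m00 M * z + m01 M.
Proof. by rewrite /numZ hornerD hornerZ hornerX hornerC. Qed.

Lemma horner_denZ M z : (denZ M).[z] = m10 M * z + m11 M.
Proof. by rewrite /denZ hornerD hornerZ hornerX hornerC. Qed.

Lemma actM_infty A B : \det B != 0 ->
  act abs A (act abs B None) = act abs (A *m B) None.
Proof.
rewrite det_mx2 => detB; have [c0|c0] := eqVneq (m10 B) 0.
  have a0 : m00 B != 0 by apply: contraNneq detB => a0; rewrite a0 c0 !mul0r mulr0 subrr.
  have cAB : m10 (A *m B) = m10 A * m00 B by rewrite m10_mul c0 mulr0 addr0.
  have [c'0|c'0] := eqVneq (m10 A) 0.
    by rewrite act_None_inf // !act_None_inf // cAB c'0 mul0r.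
  rewrite act_None_inf // !act_None_fin ?cAB ?mulf_neq0 //; congr Some; apply: funext => P.
  by rewrite m00_mul c0 mulr0 addr0 invfM mulrACA divff // mulr1.
pose z := m00 B / m10 B.
have cAB : m10 (A *m B) = m10 B * (denZ A).[z].
  by rewrite m10_mul horner_denZ /z; field.
have aAB : m00 (A *m B) = m10 B * (numZ A).[z].
  by rewrite m00_mul horner_numZ /z; field.
rewrite act_None_fin //; have [v0|v0] := eqVneq (denZ A).[z] 0.
  by rewrite act_Some_inf ?v0 ?abs0 // act_None_inf // cAB v0 mulr0.
by rewrite act_eval // act_None_fin ?cAB ?mulf_neq0 // aAB -mulf_div divff // mul1r.
Qed.

Lemma actM_pole A B s : is_mult_seminorm abs s -> \det B != 0 -> s (denZ B) = 0 ->
  act abs A (act abs B (Some s)) = act abs (A *m B) (Some s).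
Proof.
move=> hs detB v0; rewrite det_mx2 in detB.
have c0 : m10 B != 0.
  apply: contraNneq detB => c0; move/eqP: v0.
  by rewrite /denZ c0 scale0r add0r (snC hs) abs_eq0 => /eqP ->; rewrite !mulr0 subrr.
pose z := - m11 B / m10 B.
have -> : s = fun P => abs P.[z] by apply: funext; exact: sn_lin_root_eval.
have vz0 : (denZ B).[z] = 0 by rewrite horner_denZ /z mulrCA divff // mulr1 addNr.
have uz0 : (numZ B).[z] != 0.
  apply: contraNneq detB => uz0; rewrite -oppr_eq0.
  have -> : - (m00 B * m11 B - m01 B * m10 B) = m10 B * (numZ B).[z].
    by rewrite horner_numZ /z; field.
  by rewrite uz0 mulr0.
rewrite act_Some_inf ?vz0 ?abs0 //.
have vABz : (denZ (A *m B)).[z] = m10 A * (numZ B).[z].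
  by rewrite denZ_mul hornerD !hornerZ vz0 mulr0 addr0.
have [c'0|c'0] := eqVneq (m10 A) 0.
  by rewrite act_None_inf // act_Some_inf // vABz c'0 mul0r abs0.
rewrite act_None_fin // act_eval ?vABz ?mulf_neq0 //; congr Some; apply: funext => P.
by rewrite numZ_mul hornerD !hornerZ vz0 mulr0 addr0 -mulf_div divff ?mulr1.
Qed.

Lemma actM_regular A B s : is_mult_seminorm abs s -> s (denZ B) != 0 ->
  act abs A (act abs B (Some s)) = act abs (A *m B) (Some s).
Proof.
move=> hs v0; rewrite act_Some_fin //.
have vA : s (mob_num B (denZ A)) / s (denZ B) ^+ (size (denZ A)).-1 =
          s (denZ (A *m B)) / s (denZ B).
  by rewrite (sn_mob_num hs (n := 1)) ?size_denZ // expr1 denZ_mul -mob_homog_lin.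
have [vAB0|vAB0] := eqVneq (s (denZ (A *m B))) 0.
  by rewrite !act_Some_inf //= vA vAB0 mul0r.
rewrite !act_Some_fin //= ?vA ?mulf_neq0 ?invr_eq0 //; congr Some; apply: funext => P.
rewrite (sn_mob_num hs (n := (size P).-1)) // ?mob_numE ?size_mob_homog //.
by rewrite mob_homog_mul expr_div_n invf_div mulrA divfK // expf_neq0.
Qed.

Lemma actM A B x : \det B != 0 -> is_berk abs x ->
  act abs A (act abs B x) = act abs (A *m B) x.
Proof.
case: x => [s|] detB hs; last exact: actM_infty.
have [v0|v0] := eqVneq (s (denZ B)) 0; first exact: actM_pole.
exact: actM_regular.
Qed.



Definition sl2_int M : Prop := (forall i j, abs (M i j) <= 1) /\ \det M = 1.

Definition disc_image r M (y : berk R k) : Prop :=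
  exists x, [/\ is_berk abs x, closed_disc0 r x & act abs M x = y].

Lemma is_closed_ball_disc_image r M : sl2_int M -> is_closed_ball abs r (disc_image r M).
Proof. by case=> M_int detM; exists M. Qed.

Lemma sl2_int1 : sl2_int 1%:M.
Proof.
split; last exact: det1.
by move=> i j; rewrite mxE; case: (i == j); rewrite ?abs1 ?abs0 ?ler01.
Qed.

Lemma sl2_int_adj M : sl2_int M -> sl2_int (\adj M) /\ \adj M *m M = 1%:M.
Proof.
move=> [M1 detM]; rewrite mul_adj_mx detM; split=> //; split.
  move=> i j; rewrite mxE /cofactor det_mx11 !mxE absM absX absN1 expr1n mul1r.
  exact: M1.
by have := det_mulmx (\adj M) M; rewrite mul_adj_mx detM det1 mulr1 => ->.
Qed.

Definition cartan_decomposition M a : Prop :=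
  exists G K, [/\ sl2_int G, sl2_int K & M = G *m mx2 0 (\det M / a) (- a) 0 *m K].

Lemma abs_div_le1 a d : a != 0 -> abs d <= abs a -> abs (d / a) <= 1.
Proof.
move=> a0 da; have a_gt0 : 0 < abs a by rewrite lt_def abs_ge0 abs_eq0 a0.
by rewrite absM absV // ler_pdivrMr // mul1r.
Qed.

Lemma mx2_bounded a b c d : abs a <= 1 -> abs b <= 1 -> abs c <= 1 -> abs d <= 1 ->
  forall i j, abs (mx2 a b c d i j) <= 1.
Proof.
by move=> ? ? ? ?; apply: forall_ord2; rewrite mxE.
Qed.

Lemma act_antidiag_disc r a d y : a != 0 -> 0 <= r -> abs d <= abs a * r ^+ 2 ->
  is_berk abs y -> ~ closed_disc0 r y -> closed_disc0 r (act abs (mx2 0 d (- a) 0) y).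
Proof.
move=> a0 r_ge0 d_le; case: y => [s|] hs y_out; last first.
  by rewrite act_None_fin ?m10_mx2 ?oppr_eq0 //= m00_mx2 mul0r hornerX abs0.
have r_lt : r < s 'X by rewrite ltNge; apply/negP.
have a_gt0 : 0 < abs a by rewrite lt_def abs_ge0 abs_eq0 a0.
have sv : s (denZ (mx2 0 d (- a) 0)) = abs a * s 'X.
  by rewrite /denZ m10_mx2 m11_mx2 addr0 (snZ hs) absN.
have sv_gt0 : 0 < s (denZ (mx2 0 d (- a) 0)).
  by rewrite sv mulr_gt0 // (le_lt_trans r_ge0).
rewrite act_Some_fin ?gt_eqF //= (sn_mob_num hs (n := 1)) ?size_polyX ?gt_eqF // expr1.
rewrite -(expr1 'X) mob_homogXn // subnn expr0 mulr1 expr1.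
rewrite /numZ m00_mx2 m01_mx2 scale0r add0r (snC hs) ler_pdivrMr // sv.
by rewrite (le_trans d_le) // expr2 mulrCA !ler_wpM2l ?abs_ge0 // ltW.
Qed.

Lemma attracting_repelling_balls M G K a d r : sl2_int G -> sl2_int K ->
  a != 0 -> d != 0 -> 0 <= r -> abs d <= abs a * r ^+ 2 ->
  M = G *m mx2 0 d (- a) 0 *m K ->
  exists Batt Brep : berk R k -> Prop,
    [/\ is_closed_ball abs r Batt, is_closed_ball abs r Brep &
        forall x, is_berk abs x -> ~ Brep x -> Batt (act abs M x)].
Proof.
move=> G_int K_int a0 d0 r_ge0 d_le ->.
have [adjK_int adjKK] := sl2_int_adj K_int.
exists (disc_image r G), (disc_image r (\adj K)).
split; try exact: is_closed_ball_disc_image.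
move=> x x_berk x_out; set y := act abs K x.
have detK : \det K != 0 by rewrite K_int.2 oner_neq0.
have detE : \det (mx2 0 d (- a) 0) != 0.
  by rewrite det_mx2 !(m00_mx2, m01_mx2, m10_mx2, m11_mx2) mul0r sub0r mulrN opprK mulf_neq0.
have y_berk : is_berk abs y by apply: act_is_berk.
have y_out : ~ closed_disc0 r y.
  move=> y_in; apply: x_out; exists y; split=> //.
  by rewrite /y actM // adjKK act1.
exists (act abs (mx2 0 d (- a) 0) y); split.
- exact: act_is_berk.
- exact: act_antidiag_disc.
by rewrite /y !actM ?mulmxA // ?act_is_berk // det_mulmx mulf_neq0.
Qed.

Lemma cartan_corner M : m00 M != 0 -> (forall i j, abs (M i j) <= abs (m00 M)) ->
  cartan_decomposition M (m00 M).
Proof.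
move=> a0 M_le; exists (mx2 0 (-1) 1 (- (m10 M / m00 M))), (mx2 1 (m01 M / m00 M) 0 1).
have absN1_le : abs (-1) <= 1 by rewrite absN1.
have abs0_le : abs 0 <= 1 by rewrite abs0 ler01.
have abs1_le : abs 1 <= 1 by rewrite abs1.
split; [split | split | ].
- by apply: mx2_bounded; rewrite ?absN ?abs_div_le1 ?M_le.
- by rewrite det_mx2 !(m00_mx2, m01_mx2, m10_mx2, m11_mx2); ring.
- by apply: mx2_bounded; rewrite ?abs_div_le1 ?M_le.
- by rewrite det_mx2 !(m00_mx2, m01_mx2, m10_mx2, m11_mx2); ring.
by apply: eq_mx2; rewrite det_mx2 !(m00_mul, m01_mul, m10_mul, m11_mul);
  rewrite !(m00_mx2, m01_mx2, m10_mx2, m11_mx2); field.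
Qed.

Definition weyl : 'M[k]_2 := mx2 0 (-1) 1 0.

Lemma sl2_int_weyl : sl2_int weyl.
Proof.
split; first by apply: mx2_bounded; rewrite ?abs0 ?absN1 ?abs1 ?ler01.
by rewrite det_mx2 /weyl !(m00_mx2, m01_mx2, m10_mx2, m11_mx2) mul0r sub0r mulr1 opprK.
Qed.

Lemma mulmx_weyl_col0 M i : (M *m weyl) i ord0 = M i ord_max.
Proof. by rewrite mulmx2E !mxE /= mulr0 add0r mulr1. Qed.

Lemma mulmx_weyl_col1 M i : (M *m weyl) i ord_max = - M i ord0.
Proof. by rewrite mulmx2E !mxE /= mulr0 addr0 mulrN1. Qed.

Lemma mul_weyl_mx_row0 M j : (weyl *m M) ord0 j = - M ord_max j.
Proof. by rewrite mulmx2E !mxE /= mul0r add0r mulN1r. Qed.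

Lemma mul_weyl_mx_row1 M j : (weyl *m M) ord_max j = M ord0 j.
Proof. by rewrite mulmx2E !mxE /= mul1r mul0r addr0. Qed.

Definition max_entry_at M i0 j0 : Prop := forall i j, abs (M i j) <= abs (M i0 j0).

Lemma max_entry_neq0 M i0 j0 : \det M != 0 -> max_entry_at M i0 j0 -> M i0 j0 != 0.
Proof.
move=> detM M_le; apply: contraNneq detM => p0.
have M0 i j : M i j = 0.
  by apply/eqP; rewrite -abs_eq0 eq_le abs_ge0 andbT -abs0 -p0.
by rewrite det_mx2 /m00 /m01 /m10 /m11 !M0 mul0r subrr.
Qed.

Lemma pgl_norm_max_entry M :
  exists i0 j0, max_entry_at M i0 j0 /\
    pgl_norm abs M = abs (M i0 j0) / Num.sqrt (abs (\det M)).
Proof.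
rewrite /pgl_norm; set mx := Num.max (Num.max _ _) _.
have [i0 [j0 e]] : exists i0 j0, mx = abs (M i0 j0).
  by rewrite /mx !maxEle; repeat case: ifP => _; do 2 eexists.
exists i0, j0; split; last by rewrite e.
by rewrite /max_entry_at -e; apply: forall_ord2; rewrite /mx !le_max lexx ?orbT.
Qed.

Section Ultrametric.
Hypothesis abs_ultra : nonarchimedean abs.

Lemma sl2_intM A B : sl2_int A -> sl2_int B -> sl2_int (A *m B).
Proof.
move=> [A1 detA] [B1 detB]; split; last by rewrite det_mulmx detA detB mulr1.
move=> i j; rewrite mulmx2E (le_trans (abs_ultra _ _)) // ge_max !absM.
by rewrite !mulr_ile1 ?abs_ge0 ?A1 ?B1.
Qed.

Lemma cartan_decomposition_mul (P Q : 'M[k]_2) M a : sl2_int P -> sl2_int Q ->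
  cartan_decomposition M a -> cartan_decomposition (P *m M *m Q) a.
Proof.
move=> P_int Q_int [G [K [G_int K_int eqM]]].
exists (P *m G), (K *m Q); split; try exact: sl2_intM.
by rewrite !det_mulmx P_int.2 Q_int.2 mul1r mulr1 {1}eqM !mulmxA.
Qed.

Lemma cartan_exists M i0 j0 : M i0 j0 != 0 -> max_entry_at M i0 j0 ->
  exists a, abs a = abs (M i0 j0) /\ cartan_decomposition M a.
Proof.
have [adjW_int adjWW] := sl2_int_adj sl2_int_weyl.
have WadjW : weyl *m \adj weyl = 1%:M by rewrite mul_mx_adj sl2_int_weyl.2.
wlog -> : M j0 / j0 = ord0.
  move=> wlog_j0; case: (ord2P j0) => [|-> p0 M_le]; first exact: wlog_j0.
  have [a [abs_a dec]] : exists a,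
      abs a = abs ((M *m weyl) i0 ord0) /\ cartan_decomposition (M *m weyl) a.
    apply: wlog_j0; rewrite ?mulmx_weyl_col0 // => i j.
    by case: (ord2P j) => ->; rewrite ?mulmx_weyl_col0 ?mulmx_weyl_col1 ?absN.
  exists a; split; first by rewrite abs_a mulmx_weyl_col0.
  rewrite -[M]mulmx1 -WadjW mulmxA -[M *m weyl]mul1mx.
  exact: cartan_decomposition_mul sl2_int1 adjW_int dec.
wlog -> : M i0 / i0 = ord0.
  move=> wlog_i0; case: (ord2P i0) => [|-> p0 M_le]; first exact: wlog_i0.
  have [a [abs_a dec]] : exists a,
      abs a = abs ((weyl *m M) ord0 ord0) /\ cartan_decomposition (weyl *m M) a.
    apply: wlog_i0; rewrite ?mul_weyl_mx_row0 ?oppr_eq0 // => i j.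
    by case: (ord2P i) => ->; rewrite ?mul_weyl_mx_row0 ?mul_weyl_mx_row1 ?absN.
  exists a; split; first by rewrite abs_a mul_weyl_mx_row0 absN.
  rewrite -[M]mul1mx -adjWW -mulmxA -[_ *m (weyl *m M)]mulmx1.
  exact: cartan_decomposition_mul adjW_int sl2_int1 dec.
by move=> p0 M_le; exists (M ord0 ord0); split=> //; apply: cartan_corner.
Qed.

End Ultrametric.
End Action.

Theorem proposition2p7 (R : realType) (k : fieldType) (abs : k -> R) :
  complete_nonarch_valued_field abs ->
  forall M : 'M[k]_2, \det M != 0 ->
  exists Batt Brep : berk R k -> Prop,
    [/\ is_closed_ball abs (pgl_norm abs M)^-1 Batt,
        is_closed_ball abs (pgl_norm abs M)^-1 Brep &
        forall x, is_berk abs x -> ~ Brep x -> Batt (act abs M x)].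
Proof.
move=> [abs_absval abs_ultra _ _] M detM.
have [i0 [j0 [M_le ->]]] := pgl_norm_max_entry abs M.
have p0 := max_entry_neq0 abs_absval detM M_le.
have [a [abs_a [G [K [G_int K_int eqM]]]]] := cartan_exists abs_absval abs_ultra p0 M_le.
have absa0 : abs a != 0 by rewrite abs_a (abs_eq0 abs_absval).
have a0 : a != 0 by rewrite -(abs_eq0 abs_absval).
apply: (attracting_repelling_balls abs_absval G_int K_int a0 _ _ _ eqM).
- by rewrite mulf_neq0 ?invr_eq0.
- by rewrite invr_ge0 divr_ge0 ?sqrtr_ge0 ?(abs_ge0 abs_absval).
rewrite -abs_a invf_div expr_div_n sqr_sqrtr ?(abs_ge0 abs_absval) //.
rewrite (absM abs_absval) (absV abs_absval).
suff -> : abs a * (abs (\det M) / abs a ^+ 2) = abs (\det M) / abs a by [].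
by field.
Qed.
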